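(* Let $G$ be a finite group with $Z(G)=I$, let $n\in\{2,3\}$, and let $(C_1,\dots,C_n,D)$ be a tuple of conjugacy classes of $G$ with $C_1,\dots,C_n$ non-trivial and $D$ either a class of involutions or the trivial class $\{\iota\}$. For $[\underline{\sigma}]=[\sigma_1,\dots,\sigma_n,\sigma_{n+1}]\in\Sigma^i(C_1,\dots,C_n,D)$ put $[\widehat{\underline{\sigma}}]=[\sigma_1,\dots,\sigma_n,\sigma_1,\dots,\sigma_n]\in\Sigma^i(C_1,\dots,C_n,C_1,\dots,C_n)$. If $[\underline{\sigma}],[\underline{\tau}]\in\Sigma^i(C_1,\dots,C_n,D)$ and $[\underline{\tau}]\in[\underline{\sigma}]^{B_{n+1}}$, then $[\widehat{\underline{\tau}}]\in[\widehat{\underline{\sigma}}]^{B_{2n}}$.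
   Context: $\iota$ is the identity and $I$ the trivial group. For conjugacy classes $C_1,\dots,C_m$ (here the trivial class is allowed), $\Sigma^i(C_1,\dots,C_m)$ is the set of $G$-conjugacy classes $[\sigma_1,\dots,\sigma_m]$ (simultaneous conjugation) of tuples with $\sigma_j\in C_j$, $\langle\sigma_1,\dots,\sigma_m\rangle=G$, $\sigma_1\cdots\sigma_m=\iota$. The Hurwitz braid group $H_m$ is generated by $\beta_2,\dots,\beta_m$ and acts from the right by $[\underline{\sigma}]^{\beta_i}=[\sigma_1,\dots,\sigma_{i-2},\sigma_{i-1}\sigma_i\sigma_{i-1}^{-1},\sigma_{i-1},\sigma_{i+1},\dots,\sigma_m]$; the pure braid group $B_m$ is the subgroup generated by $\beta_{ij}=\beta_{i+1}^{-1}\cdots\beta_{j-1}^{-1}\beta_j^2\beta_{j-1}\cdots\beta_{i+1}$, $1\le i<j\le m$, and preserves each $\Sigma^i(C_1,\dots,C_m)$. $X^{B_m}$ denotes the $B_m$-orbit of $X$. *)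

From mathcomp Require Import all_boot all_fingroup all_solvable.
Set Implicit Arguments. Unset Strict Implicit. Unset Printing Implicit Defensive.
Local Open Scope group_scope.

Section Hurwitz.
Variable gT : finGroupType.

(* Action of the Hurwitz braid generator beta_i (1-based, 2 <= i <= m) on a
   tuple (s_1,...,s_m), from the right:
   (.., s_{i-1}, s_i, ..) |-> (.., s_{i-1} s_i s_{i-1}^-1, s_{i-1}, ..).
   Note: in mathcomp x ^ y = y^-1 * x * y, so s_{i-1} s_i s_{i-1}^-1
   is s_i ^ s_{i-1}^-1.  Positions i-1, i (1-based) are i.-2, i.-1 (0-based). *)
Definition hurw (i : nat) (s : seq gT) : seq gT :=
  [seq if k == i.-2 then (nth 1 s i.-1) ^ (nth 1 s i.-2)^-1
       else if k == i.-1 then nth 1 s i.-2 else nth 1 s k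
  | k <- iota 0 (size s)].

Definition hurw_inv (i : nat) (s : seq gT) : seq gT :=
  [seq if k == i.-2 then nth 1 s i.-1
       else if k == i.-1 then (nth 1 s i.-2) ^ (nth 1 s i.-1) else nth 1 s k
  | k <- iota 0 (size s)].

(* Right action of the pure braid generator
   beta_ij = beta_{i+1}^-1 ... beta_{j-1}^-1 beta_j^2 beta_{j-1} ... beta_{i+1}
   (the leftmost factor acts first, since the action is a right action). *)
Definition pbraid (i j : nat) (s : seq gT) : seq gT :=
  let ks := iota i.+1 (j.-1 - i) in
  let s1 := foldl (fun s k => hurw_inv k s) s ks in
  let s2 := hurw j (hurw j s1) in
  foldl (fun s k => hurw k s) s2 (rev ks).

Definition pbraid_inv (i j : nat) (s : seq gT) : seq gT :=
  let ks := iota i.+1 (j.-1 - i) in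
  let s1 := foldl (fun s k => hurw_inv k s) s ks in
  let s2 := hurw_inv j (hurw_inv j s1) in
  foldl (fun s k => hurw k s) s2 (rev ks).

(* pure_orbit G m s t : the class [t] lies in the B_m-orbit of the class [s],
   where classes are taken modulo simultaneous conjugation by G. *)
Inductive pure_orbit (G : {group gT}) (m : nat) (s : seq gT) : seq gT -> Prop :=
| po_refl : pure_orbit G m s s
| po_conj t g : g \in G -> pure_orbit G m s t ->
    pure_orbit G m s [seq x ^ g | x <- t]
| po_braid t i j : 1 <= i -> i < j -> j <= m -> pure_orbit G m s t ->
    pure_orbit G m s (pbraid i j t)
| po_braid_inv t i j : 1 <= i -> i < j -> j <= m -> pure_orbit G m s t ->
    pure_orbit G m s (pbraid_inv i j t).

Definition in_Sigma (G : {group gT}) (Cs : seq {set gT}) (s : seq gT) : Prop :=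
  [/\ size s = size Cs,
      forall k, k < size s -> nth 1 s k \in nth set0 Cs k,
      <<[set x in s]>> = G
    & \prod_(x <- s) x = 1].

End Hurwitz.

From mathcomp Require Import all_boot all_fingroup all_solvable zify.
Set Implicit Arguments. Unset Strict Implicit. Unset Printing Implicit Defensive.
Local Open Scope group_scope.

(* Pure braids preserve the product of a tuple, so every tuple in the
   B_(n+1)-orbit of s has the form (u, (prod u)^-1) with u in G^n.  For n = 2, 3
   the action of each generator beta_ij^(+-1) of B_(n+1) on (u, (prod u)^-1) is
   matched, on the doubled tuple (u, u), by a product of pure braids of B_(2n)
   followed by a simultaneous conjugation by an element of G; induction along
   the orbit gives the claim. *)

Lemma map_iota_pair (T : Type) (x0 : T) (f : nat -> T) (s : seq T) p :
    p.+1 < size s -> (forall k, k != p -> k != p.+1 -> f k = nth x0 s k) ->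
  [seq f k | k <- iota 0 (size s)] = take p s ++ f p :: f p.+1 :: drop p.+2 s.
Proof.
move=> lt_p_s fE; have sizeE : size s = p + (size s - p.+2).+2 by lia.
rewrite [in iota _ _]sizeE iotaD map_cat /= add0n; congr (_ ++ _ :: _ :: _).
  rewrite -[s in take p s]drop0 -(map_nth_iota x0); last by rewrite subn0 ltnW // ltnW.
  by apply/eq_in_map => k; rewrite mem_iota => /andP[_ lt_kp]; apply: fE; lia.
rewrite -[drop p.+2 s]take_size size_drop -(map_nth_iota x0) //.
by apply/eq_in_map => k; rewrite mem_iota => /andP[le_pk _]; apply: fE; lia.
Qed.

Section HurwitzAction.
Variables (gT : finGroupType) (G : {group gT}).

Lemma prod_replace_pair (s : seq gT) p x y :
    p.+1 < size s -> x * y = nth 1 s p * nth 1 s p.+1 ->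
  \prod_(z <- take p s ++ x :: y :: drop p.+2 s) z = \prod_(z <- s) z.
Proof.
move=> lt_p_s xyE.
rewrite -{3}(cat_take_drop p s) (drop_nth 1 (ltnW lt_p_s)) (drop_nth 1 lt_p_s).
by rewrite !big_cat !big_cons /= (mulgA x) xyE -mulgA.
Qed.

Lemma hurwE p (s : seq gT) : p.+1 < size s ->
  hurw p.+2 s = take p s ++ nth 1 s p.+1 ^ (nth 1 s p)^-1 :: nth 1 s p :: drop p.+2 s.
Proof.
move=> lt_p_s; rewrite /hurw /hurw_inv (map_iota_pair (x0 := 1) lt_p_s).
rewrite /= ?eqxx ?gtn_eqF //.
by move=> k /negPf-> /negPf->.
Qed.

Lemma hurw_invE p (s : seq gT) : p.+1 < size s ->
  hurw_inv p.+2 s = take p s ++ nth 1 s p.+1 :: nth 1 s p ^ nth 1 s p.+1 :: drop p.+2 s.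
Proof.
move=> lt_p_s; rewrite /hurw /hurw_inv (map_iota_pair (x0 := 1) lt_p_s).
rewrite /= ?eqxx ?gtn_eqF //.
by move=> k /negPf-> /negPf->.
Qed.

Lemma nth_in_group (s : seq gT) k : {subset s <= G} -> nth 1 s k \in G.
Proof.
move=> sG; have [/(mem_nth 1)/sG //|le_s_k] := ltnP k (size s).
by rewrite nth_default.
Qed.

Definition prod1_tuple m (s : seq gT) : Prop :=
  [/\ size s = m, \prod_(x <- s) x = 1 & {subset s <= G}].

Lemma hurw_prod1_tuple m k s : 2 <= k <= m -> prod1_tuple m s ->
  prod1_tuple m (hurw k s) /\ prod1_tuple m (hurw_inv k s).
Proof.
case: k => [|[|p]] // /andP[_ le_k_m] [sz_s prod_s sG].
have lt_p_s : p.+1 < size s by rewrite sz_s.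
split; split; rewrite ?size_map ?size_iota //.
- by rewrite hurwE // prod_replace_pair // conjgE invgK !mulgA mulgKV.
- move=> _ /mapP[k _ ->].
  by do 2?case: ifP => _; rewrite ?groupJ ?groupV ?(nth_in_group _ sG).
- by rewrite hurw_invE // prod_replace_pair // conjgE mulKVg.
- move=> _ /mapP[k _ ->].
  by do 2?case: ifP => _; rewrite ?groupJ ?(nth_in_group _ sG).
Qed.

Lemma foldl_prod1_tuple m (h : nat -> seq gT -> seq gT) ks s :
    (forall k t, k \in ks -> prod1_tuple m t -> prod1_tuple m (h k t)) ->
  prod1_tuple m s -> prod1_tuple m (foldl (fun t k => h k t) s ks).
Proof.
elim: ks s => //= k ks IHks s hP sP.
apply: IHks => [k' t k'_ks|]; apply: hP; rewrite ?inE ?k'_ks ?orbT ?eqxx //.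
Qed.

Lemma pbraid_prod1_tuple m i j s : 1 <= i -> i < j -> j <= m -> prod1_tuple m s ->
  prod1_tuple m (pbraid i j s) /\ prod1_tuple m (pbraid_inv i j s).
Proof.
move=> le1i lt_ij le_jm sP.
have ksP k t : k \in iota i.+1 (j.-1 - i) -> prod1_tuple m t ->
    prod1_tuple m (hurw k t) /\ prod1_tuple m (hurw_inv k t).
  by rewrite mem_iota => k_ks; apply: hurw_prod1_tuple; lia.
have jP t : prod1_tuple m t -> prod1_tuple m (hurw j t) /\ prod1_tuple m (hurw_inv j t).
  by apply: hurw_prod1_tuple; lia.
have s1P : prod1_tuple m (foldl (fun t k => hurw_inv k t) s (iota i.+1 (j.-1 - i))).
  by apply: foldl_prod1_tuple sP => k t k_ks /(ksP _ _ k_ks)[].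
have unfoldP t : prod1_tuple m t ->
    prod1_tuple m (foldl (fun t k => hurw k t) t (rev (iota i.+1 (j.-1 - i)))).
  by apply: foldl_prod1_tuple => k t'; rewrite mem_rev => k_ks /(ksP _ _ k_ks)[].
by split; apply: unfoldP; [apply: (jP _ (jP _ s1P).1).1 | apply: (jP _ (jP _ s1P).2).2].
Qed.

Lemma prod1_tuple_conj m s g : g \in G -> prod1_tuple m s ->
  prod1_tuple m [seq x ^ g | x <- s].
Proof.
move=> gG [sz_s prod_s sG]; split; first by rewrite size_map.
  by rewrite big_map -conjg_prod prod_s conj1g.
by move=> _ /mapP[x /sG xG ->]; rewrite groupJ.
Qed.

Lemma pure_orbit_trans m s t u :
  pure_orbit G m s t -> pure_orbit G m t u -> pure_orbit G m s u.
Proof.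
move=> st; elim=> [//|v g gG _ sv|v i j le1i lt_ij le_jm _ sv
                  |v i j le1i lt_ij le_jm _ sv].
- exact: po_conj.
- exact: po_braid.
- exact: po_braid_inv.
Qed.

Definition hat n (s : seq gT) := take n s ++ take n s.

Lemma hat_conj n s g : hat n [seq x ^ g | x <- s] = [seq x ^ g | x <- hat n s].
Proof. by rewrite /hat map_cat map_take. Qed.

Lemma pure_orbit_hat n s t :
    (forall i j u, 1 <= i -> i < j -> j <= n.+1 -> prod1_tuple n.+1 u ->
       pure_orbit G (2 * n)%N (hat n u) (hat n (pbraid i j u)) /\
       pure_orbit G (2 * n)%N (hat n u) (hat n (pbraid_inv i j u))) ->
  prod1_tuple n.+1 s -> pure_orbit G n.+1 s t ->
  pure_orbit G (2 * n)%N (hat n s) (hat n t).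
Proof.
move=> hat_pbraid sP st.
suff [] : prod1_tuple n.+1 t /\ pure_orbit G (2 * n)%N (hat n s) (hat n t) by [].
elim: st => [|u g gG _ [uP su]|u i j le1i lt_ij le_jn _ [uP su]
             |u i j le1i lt_ij le_jn _ [uP su]].
- by split; last exact: po_refl.
- by split; [apply: prod1_tuple_conj | rewrite hat_conj; apply: po_conj].
- split; first by have [] := pbraid_prod1_tuple le1i lt_ij le_jn uP.
  exact: pure_orbit_trans su (hat_pbraid _ _ _ le1i lt_ij le_jn uP).1.
- split; first by have [] := pbraid_prod1_tuple le1i lt_ij le_jn uP.
  exact: pure_orbit_trans su (hat_pbraid _ _ _ le1i lt_ij le_jn uP).2.
Qed.

Lemma prod1_tuple_rcons n t : prod1_tuple n.+1 t ->
  exists2 u, t = rcons u (\prod_(x <- u) x)^-1 & size u = n /\ {subset u <= G}.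
Proof.
case/lastP: t => [[]//|u d] [sz_ud prod_ud udG]; exists u.
  apply/congr1/eqP; rewrite eq_sym eq_invg_mul.
  by rewrite -cats1 big_cat big_seq1 in prod_ud; rewrite prod_ud.
rewrite size_rcons in sz_ud; split; first exact: eq_add_S.
by move=> x ux; apply: udG; rewrite mem_rcons inE ux orbT.
Qed.

Lemma pure_orbit_simulate m s t g (w : seq gT -> seq gT) :
  g \in G -> pure_orbit G m s (w s) -> t = [seq x ^ g | x <- w s] -> pure_orbit G m s t.
Proof. by move=> gG sw ->; apply: po_conj. Qed.

Ltac conj_norm := rewrite ?conjgE ?invMg ?invgK ?mulgA;
  rewrite ?(mulgK, mulgKV, mulgV, mulVg, mul1g, mulg1, invg1).

Tactic Notation "simulate" uconstr(h) uconstr(word) :=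
  refine (pure_orbit_simulate (g := h) (w := word) _ _ _);
  [ repeat first [ assumption | apply: group1 | apply: groupM | rewrite groupV ]
  | do ?[ apply: po_braid => // | apply: po_braid_inv => // ]; exact: po_refl
  | rewrite /hat /pbraid /pbraid_inv /=; repeat congr (_ :: _); conj_norm; done ].

Lemma pbraid_hat3 a b c i j : a \in G -> b \in G -> c \in G ->
    1 <= i -> i < j -> j <= 4 ->
  let t := [:: a; b; c; (a * b * c)^-1] in
  pure_orbit G 6 (hat 3 t) (hat 3 (pbraid i j t)) /\
  pure_orbit G 6 (hat 3 t) (hat 3 (pbraid_inv i j t)).
Proof.
move=> aG bG cG; case: i => [|[|[|[|i]]]] // _;
  case: j => [|[|[|[|[|j]]]]] // _ _ t; rewrite {}/t.
- split; [simulate 1 (fun s => pbraid 4 5 (pbraid 1 2 s))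
         |simulate 1 (fun s => pbraid_inv 4 5 (pbraid_inv 1 2 s))].
- split; [simulate 1 (fun s => pbraid 4 6 (pbraid 1 3 s))
         |simulate 1 (fun s => pbraid_inv 4 6 (pbraid_inv 1 3 s))].
- split; [simulate (b * c) (fun s => pbraid 5 6 (pbraid 2 3 s))
         |simulate (c^-1 * b^-1) (fun s => pbraid_inv 5 6 (pbraid_inv 2 3 s))].
- split; [simulate 1 (fun s => pbraid 5 6 (pbraid 2 3 s))
         |simulate 1 (fun s => pbraid_inv 5 6 (pbraid_inv 2 3 s))].
- split; [simulate (c^-1 * b^-1 * c) (fun s =>
            pbraid_inv 4 5 (pbraid_inv 1 2 (pbraid_inv 5 6 (pbraid_inv 2 3 s))))
         |simulate (a * b * a^-1) (fun s =>
            pbraid 5 6 (pbraid 2 3 (pbraid 4 5 (pbraid 1 2 s))))].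
- split; [simulate (a * b) (fun s => pbraid 4 5 (pbraid 1 2 s))
         |simulate (b^-1 * a^-1) (fun s => pbraid_inv 4 5 (pbraid_inv 1 2 s))].
Qed.

Lemma pbraid_hat2 a b i j : a \in G -> b \in G -> 1 <= i -> i < j -> j <= 3 ->
  let t := [:: a; b; (a * b)^-1] in
  pure_orbit G 4 (hat 2 t) (hat 2 (pbraid i j t)) /\
  pure_orbit G 4 (hat 2 t) (hat 2 (pbraid_inv i j t)).
Proof.
move=> aG bG; case: i => [|[|[|i]]] // _; case: j => [|[|[|[|j]]]] // _ _ t; rewrite {}/t.
- split; [simulate 1 (fun s => pbraid 3 4 (pbraid 1 2 s))
         |simulate 1 (fun s => pbraid_inv 3 4 (pbraid_inv 1 2 s))].
- split; [simulate b (fun s => s) | simulate b^-1 (fun s => s)].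
- split; [simulate a (fun s => s) | simulate a^-1 (fun s => s)].
Qed.

Lemma pure_orbit_hat3 s t : prod1_tuple 4 s -> pure_orbit G 4 s t ->
  pure_orbit G 6 (hat 3 s) (hat 3 t).
Proof.
apply: pure_orbit_hat => i j v le1i lt_ij le_j4.
case/prod1_tuple_rcons=> u -> [sz_u uG].
case: u sz_u uG => [|a [|b [|c []]]] // _ uG.
rewrite !big_cons big_nil mulg1 mulgA.
by apply: pbraid_hat3 => //; apply: uG; rewrite !inE eqxx ?orbT.
Qed.

Lemma pure_orbit_hat2 s t : prod1_tuple 3 s -> pure_orbit G 3 s t ->
  pure_orbit G 4 (hat 2 s) (hat 2 t).
Proof.
apply: pure_orbit_hat => i j v le1i lt_ij le_j3.
case/prod1_tuple_rcons=> u -> [sz_u uG].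
case: u sz_u uG => [|a [|b []]] // _ uG.
rewrite !big_cons big_nil mulg1.
by apply: pbraid_hat2 => //; apply: uG; rewrite !inE eqxx ?orbT.
Qed.

End HurwitzAction.

Theorem proposition10 (gT : finGroupType) (G : {group gT}) (n : nat)
    (Cs : seq {set gT}) (D : {set gT}) (s t : seq gT) :
  'Z(G) = 1 ->
  (n = 2 \/ n = 3)%N ->
  size Cs = n ->
  (forall C, C \in Cs -> C \in classes G /\ C != 1) ->
  D \in classes G ->
  (forall x, x \in D -> x ^+ 2 = 1) ->
  in_Sigma G (rcons Cs D) s ->
  in_Sigma G (rcons Cs D) t ->
  pure_orbit G n.+1 s t ->
  pure_orbit G (2 * n)%N (take n s ++ take n s) (take n t ++ take n t).
Proof.
move=> _ n23 sz_Cs _ _ _ [sz_s _ gen_s prod_s] _ st.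
have sP : prod1_tuple G n.+1 s.
  split=> //; first by rewrite sz_s size_rcons sz_Cs.
  by move=> x sx; rewrite -gen_s mem_gen // inE.
case: n23 => n_eq; rewrite n_eq in sP st *.
  exact: pure_orbit_hat2 sP st.
exact: pure_orbit_hat3 sP st.
Qed.
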